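(* Let $S=\{x_1,\dots,x_N\}\subset\mathbb{R}^n$ be a two-distance tight frame for $\mathbb{R}^n$ with inner products $a,b$, $a^2\neq b^2$, and let $s=\sum_{i=1}^N x_i$. Then exactly one of the following holds: (i) $s=0$, so $S$ is a spherical $2$-design in $\mathbb{R}^n$; in this case $-n(a+b)-nab(N-1)=N-n$; (ii) $\langle x_i,s\rangle=N/n$ for all $i$ and $\|s\|^2=N^2/n$; the vectors $y_i=\frac{x_i-s/N}{\sqrt{1-1/n}}$, $i=1,\dots,N$, are unit vectors lying in the $(n-1)$-dimensional subspace $s^\perp$, and $\{y_1,\dots,y_N\}$ is a spherical $2$-design in $s^\perp$ (so $S$ lies on a sphere of radius $\sqrt{1-1/n}$ centred at $s/N$); in this case $(N-n)(a+b)-nab(N-1)=N-n$.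
   Context: A two-distance tight frame for $\mathbb{R}^n$ is a finite set of unit vectors $\{x_1,\dots,x_N\}\subset\mathbb{R}^n$ such that there are two real numbers $a\neq b$ with $\langle x_i,x_j\rangle\in\{a,b\}$ for all $i\neq j$, and $\sum_{i=1}^N\langle x,x_i\rangle^2=\frac{N}{n}\|x\|^2$ for all $x\in\mathbb{R}^n$. A set of unit vectors $\{y_1,\dots,y_N\}$ in an $m$-dimensional real inner product space $V$ is a spherical $2$-design in $V$ if $\sum_i y_i=0$ and $\sum_{i,j=1}^N\langle y_i,y_j\rangle^2=N^2/m$ (equivalently, $\sum_i y_i=0$ and $\sum_i\langle x,y_i\rangle^2=\frac{N}{m}\|x\|^2$ for all $x\in V$). *)

(* R is an arbitrary real closed field (needed for sqrt);
   vectors of R^n are row vectors 'rV[R]_n; subspaces are row spaces (mxalgebra). *)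
From HB Require Import structures.
From mathcomp Require Import all_boot all_order all_algebra.
Set Implicit Arguments.
Unset Strict Implicit.
Unset Printing Implicit Defensive.
Import Order.TTheory GRing.Theory Num.Theory.
Local Open Scope ring_scope.

Definition dot (R : rcfType) (n : nat) (u v : 'rV[R]_n) : R :=
  \sum_(k < n) u 0 k * v 0 k.

Definition two_distance_tight_frame (R : rcfType) (n N : nat)
    (x : 'I_N -> 'rV[R]_n) (a b : R) : Prop :=
  [/\ injective x,                                   (* a set of N vectors *)
      forall i, dot (x i) (x i) = 1,
      a != b,
      forall i j, i != j -> dot (x i) (x j) = a \/ dot (x i) (x j) = b
    & forall v : 'rV[R]_n,
        \sum_(i < N) (dot v (x i)) ^+ 2 = (N%:R / n%:R) * dot v v ].

Definition spherical_2_design (R : rcfType) (n N : nat) (V : 'M[R]_n)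
    (y : 'I_N -> 'rV[R]_n) : Prop :=
  [/\ forall i, (y i <= V)%MS,
      forall i, dot (y i) (y i) = 1,
      \sum_(i < N) y i = 0
    & \sum_(i < N) \sum_(j < N) (dot (y i) (y j)) ^+ 2
        = (N%:R ^+ 2) / (\rank V)%:R ].

Definition orth_compl (R : rcfType) (n : nat) (s : 'rV[R]_n) : 'M[R]_n :=
  kermx s^T.

From HB Require Import structures.
From mathcomp Require Import all_boot all_order all_algebra.
From mathcomp Require Import ring lra.
Import Order.TTheory GRing.Theory Num.Theory.
Local Open Scope ring_scope.

(* Let x_1..x_N be a two-distance tight frame with inner products a, b and
   frame constant c = N/n, and let s = sum_i x_i.
   - Polarizing the tight-frame identity gives sum_i <v,x_i><w,x_i> = c <v,w>.
   - Summing (<x_i,x_j> - a)(<x_i,x_j> - b), which vanishes for j <> i, over j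
     gives  c - (a+b) <x_i,s> + N ab = (1-a)(1-b);  as a + b <> 0 (a^2 <> b^2),
     <x_i,s> = r does not depend on i.
   - Polarization with v = x_i, w = s gives r^2 = c r, so r = 0 or r = c.
     Since <s,s> = N r, the case r = 0 is s = 0 (case (i)).
   - If r = c, the centred vectors z_i = x_i - s/N satisfy
     <z_i,z_j> = <x_i,x_j> - 1/n and <z_i,s> = 0; rescaled, they form a
     spherical 2-design in s^perp, which has dimension n - 1 (case (ii)).
   The two cases exclude each other because <s,s> = N^2/n in case (ii).
   Each case's equation in a, b is the row identity above for r = 0 or r = c. *)

Section InnerProduct.
Context {R : rcfType} {n : nat}.
Implicit Types (s u v w : 'rV[R]_n).

Lemma dotC u v : dot u v = dot v u.
Proof. by apply: eq_bigr => k _; rewrite mulrC. Qed.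

Lemma dotDl u w v : dot (u + w) v = dot u v + dot w v.
Proof. by rewrite /dot -big_split; apply: eq_bigr => k _; rewrite mxE mulrDl. Qed.

Lemma dotBl u w v : dot (u - w) v = dot u v - dot w v.
Proof. by rewrite /dot -sumrB; apply: eq_bigr => k _; rewrite !mxE mulrBl. Qed.

Lemma dotZl (c : R) u v : dot (c *: u) v = c * dot u v.
Proof. by rewrite /dot mulr_sumr; apply: eq_bigr => k _; rewrite mxE mulrA. Qed.

Lemma dot0l v : dot 0 v = 0.
Proof. by rewrite /dot big1 // => k _; rewrite mxE mul0r. Qed.

Lemma dotDr u w v : dot v (u + w) = dot v u + dot v w.
Proof. by rewrite dotC dotDl !(dotC v). Qed.

Lemma dotBr u w v : dot v (u - w) = dot v u - dot v w.
Proof. by rewrite dotC dotBl !(dotC v). Qed.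

Lemma dotZr (c : R) u v : dot v (c *: u) = c * dot v u.
Proof. by rewrite dotC dotZl dotC. Qed.

Lemma dot0r v : dot v 0 = 0.
Proof. by rewrite dotC dot0l. Qed.

Lemma dot_suml (N : nat) (f : 'I_N -> 'rV[R]_n) v :
  dot (\sum_(i < N) f i) v = \sum_(i < N) dot (f i) v.
Proof. exact: (big_morph (fun u => dot u v) (fun u w => dotDl u w v) (dot0l v)). Qed.

Lemma dot_sumr (N : nat) (f : 'I_N -> 'rV[R]_n) v :
  dot v (\sum_(i < N) f i) = \sum_(i < N) dot v (f i).
Proof. by rewrite dotC dot_suml; apply: eq_bigr => i _; rewrite dotC. Qed.

Lemma dot_eq0 v : dot v v = 0 -> v = 0.
Proof.
move=> vv0; apply/rowP => k; rewrite mxE.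
have sq_ge0 (i : 'I_n) : predT i -> 0 <= v 0 i * v 0 i by rewrite -expr2 sqr_ge0.
by move: (psumr_eq0P sq_ge0 vv0 (isT : predT k)) => /eqP; rewrite -expr2 sqrf_eq0 => /eqP.
Qed.

Lemma orth_complP v s : (v <= orth_compl s)%MS = (dot v s == 0).
Proof.
have vsT : v *m s^T = (dot v s)%:M.
  by apply/matrixP => p q; rewrite !ord1 !mxE eqxx mulr1n; apply: eq_bigr => k _; rewrite mxE.
rewrite /orth_compl; apply/sub_kermxP/eqP; rewrite vsT.
  by move/matrixP/(_ 0 0); rewrite !mxE eqxx mulr1n.
by move->; rewrite raddf0.
Qed.

Lemma rank_orth_compl s : s != 0 -> \rank (orth_compl s) = n.-1.
Proof. by move=> s0; rewrite mxrank_ker mxrank_tr rank_rV s0 subn1. Qed.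

End InnerProduct.

Section TightFrame.
Context {R : rcfType} {n N : nat} {x : 'I_N -> 'rV[R]_n} {c : R}.
Hypothesis tight : forall v, \sum_(i < N) dot v (x i) ^+ 2 = c * dot v v.

Lemma tight_frame_polar v w :
  \sum_(i < N) dot v (x i) * dot w (x i) = c * dot v w.
Proof.
have expand i : dot (v + w) (x i) ^+ 2
    = dot v (x i) ^+ 2 + dot w (x i) ^+ 2 + 2 * (dot v (x i) * dot w (x i)).
  by rewrite dotDl; ring.
have := tight (v + w).
rewrite (eq_bigr _ (fun i _ => expand i)) !big_split /= -mulr_sumr !tight.
rewrite !dotDl !dotDr (dotC w v) => E.
by lra.
Qed.

End TightFrame.

Section TwoDistanceSet.
Context {R : rcfType} {n N : nat} (x : 'I_N -> 'rV[R]_n) (a b : R).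
Hypothesis unit : forall i, dot (x i) (x i) = 1.
Hypothesis two_dist : forall i j, i != j -> dot (x i) (x j) = a \/ dot (x i) (x j) = b.

(* Only the diagonal term of a row survives in the annihilating polynomial
   (t - a)(t - b) of the off-diagonal Gram entries. *)
Lemma two_distance_row i :
  \sum_(j < N) (dot (x i) (x j) - a) * (dot (x i) (x j) - b) = (1 - a) * (1 - b).
Proof.
rewrite (bigD1 i) //= unit big1 ?addr0 // => j ji.
have ij : i != j by rewrite eq_sym.
by case: (two_dist i j ij) => ->; rewrite ?subrr ?mul0r ?mulr0.
Qed.

Lemma two_distance_tight_row (c : R) :
  (forall v, \sum_(j < N) dot v (x j) ^+ 2 = c * dot v v) ->
  forall i, c - (a + b) * dot (x i) (\sum_(j < N) x j) + N%:R * (a * b)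
            = (1 - a) * (1 - b).
Proof.
move=> tight i; rewrite -(two_distance_row i).
have expand j : (dot (x i) (x j) - a) * (dot (x i) (x j) - b)
    = dot (x i) (x j) ^+ 2 - (a + b) * dot (x i) (x j) + a * b.
  by ring.
rewrite (eq_bigr _ (fun j _ => expand j)) !big_split /= sumrN -mulr_sumr.
by rewrite tight unit mulr1 dot_sumr sumr_const card_ord mulr_natl.
Qed.

End TwoDistanceSet.

Section TwoDistanceTightFrame.
Context {R : rcfType} {n N : nat} {x : 'I_N -> 'rV[R]_n} {a b : R}.
Hypothesis frame : two_distance_tight_frame x a b.
Hypothesis n_gt0 : (0 < n)%N.
Hypothesis N_gt1 : (1 < N)%N.

Local Notation s := (\sum_(i < N) x i).
Local Notation c := (N%:R / n%:R : R).

Fact dim_neq0 : n%:R != 0 :> R. Proof. by rewrite pnatr_eq0 -lt0n. Qed.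
Fact size_neq0 : N%:R != 0 :> R. Proof. by rewrite pnatr_eq0 -lt0n ltnW. Qed.

Lemma frame_unit i : dot (x i) (x i) = 1.
Proof. by case: frame. Qed.

Lemma frame_tight v : \sum_(i < N) dot v (x i) ^+ 2 = c * dot v v.
Proof. by case: frame. Qed.

Lemma frame_row i : c - (a + b) * dot (x i) s + N%:R * (a * b) = (1 - a) * (1 - b).
Proof. by case: frame => _ unit _ two_dist tight; exact: two_distance_tight_row. Qed.

(* The row identity multiplied by n: the relation between a, b, N, n
   satisfied in both cases of the proposition. *)
Lemma frame_equation i :
  (n%:R * dot (x i) s - n%:R) * (a + b) - n%:R * a * b * (N%:R - 1)
  = N%:R - n%:R.
Proof.
move: (frame_row i); move: (dot (x i) s) => r K.
apply/eqP; rewrite -subr_eq0 -(mulr0 (- n%:R)) -(subrr ((1 - a) * (1 - b))) -{1}K.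
by apply/eqP; field; exact: dim_neq0.
Qed.

(* Since a + b <> 0, the row identity forces <x_i, s> to be constant. *)
Lemma frame_inner_sum_const : a ^+ 2 != b ^+ 2 ->
  forall i j, dot (x i) s = dot (x j) s.
Proof.
move=> ab2 i j.
have ab0 : a + b != 0 by move: ab2; rewrite eqf_sqr negb_or addr_eq0 => /andP[].
by apply: (mulfI ab0); have := frame_row i; have := frame_row j; lra.
Qed.

(* The common value r of <x_i, s> satisfies r^2 = c r, so either s = 0
   or <x_i, s> = c for all i. *)
Lemma frame_sum_cases : a ^+ 2 != b ^+ 2 -> s = 0 \/ forall i, dot (x i) s = c.
Proof.
move=> ab2; pose i0 : 'I_N := Ordinal (ltnW N_gt1).
set r := dot (x i0) s.
have inner_r i : dot (x i) s = r by exact: frame_inner_sum_const.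
have r_fixed : r * r = c * r.
  rewrite -(tight_frame_polar frame_tight (x i0) s).
  rewrite (eq_bigr (fun j => dot (x i0) (x j) * r)) => [|j _]; last by rewrite (dotC s) inner_r.
  by rewrite -mulr_suml -dot_sumr.
have : r * (r - c) == 0 by rewrite mulrBr r_fixed mulrC subrr.
rewrite mulf_eq0 subr_eq0 => /orP[/eqP r0|/eqP rc]; [left|right=> i].
  apply: dot_eq0; rewrite dot_suml (eq_bigr _ (fun i _ => inner_r i)) r0.
  by rewrite sumr_const mul0rn.
by rewrite inner_r.
Qed.

Lemma frame_design : s = 0 -> spherical_2_design 1%:M x.
Proof.
move=> s0; split=> // [i|i|]; [exact: submx1 | exact: frame_unit |].
rewrite (eq_bigr (fun=> c)) => [|i _]; last by rewrite frame_tight frame_unit mulr1.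
by rewrite sumr_const card_ord mxrank1; field; exact: dim_neq0.
Qed.

Section ShiftedCase.
Hypothesis inner : forall i, dot (x i) s = c.

Lemma frame_sum_norm : dot s s = N%:R ^+ 2 / n%:R.
Proof.
by rewrite dot_suml (eq_bigr _ (fun i _ => inner i)) sumr_const card_ord; field; exact: dim_neq0.
Qed.

Lemma frame_sum_neq0 : s != 0.
Proof.
apply/eqP => s0; move/eqP: frame_sum_norm; rewrite s0 dot0l eq_sym.
by rewrite mulf_eq0 invr_eq0 sqrf_eq0 (negbTE size_neq0) (negbTE dim_neq0).
Qed.

Local Notation z i := (x i - N%:R^-1 *: s).

Lemma centred_dot i j : dot (z i) (z j) = dot (x i) (x j) - n%:R^-1.
Proof.
rewrite !dotBl !dotBr !dotZl !dotZr inner (dotC s) inner frame_sum_norm.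
by move: (dot (x i) (x j)) => g; field; rewrite size_neq0 dim_neq0.
Qed.

Lemma centred_norm i : dot (z i) (z i) = 1 - n%:R^-1.
Proof. by rewrite centred_dot frame_unit. Qed.

Lemma centred_orth i : dot (z i) s = 0.
Proof. by rewrite dotBl dotZl inner frame_sum_norm; field; rewrite size_neq0 dim_neq0. Qed.

(* If n = 1 every x_i would equal s/N, contradicting N > 1 distinct vectors. *)
Lemma dim_gt1 : (1 < n)%N.
Proof.
rewrite ltn_neqAle n_gt0 andbT; apply/eqP => n1.
have z0 i : z i = 0 by apply: dot_eq0; rewrite centred_dot frame_unit -n1 invr1 subrr.
have x_eq i : x i = N%:R^-1 *: s by rewrite -(subrK (N%:R^-1 *: s) (x i)) z0 add0r.
case: frame => xinj _ _ _ _.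
by move/xinj/(congr1 val): (etrans (x_eq (Ordinal (ltnW N_gt1))) (esym (x_eq (Ordinal N_gt1)))).
Qed.

Local Notation t := (1 - n%:R^-1 : R).

Fact dim_sub1_neq0 : n%:R - 1 != 0 :> R.
Proof. by rewrite subr_eq0 pnatr_eq1 gtn_eqF ?dim_gt1. Qed.

Fact radius_neq0 : t != 0.
Proof. by rewrite subr_eq0 eq_sym invr_eq1 pnatr_eq1 gtn_eqF ?dim_gt1. Qed.

Lemma centred_gram_row i : \sum_(j < N) (dot (x i) (x j) - n%:R^-1) ^+ 2 = c * t.
Proof.
have expand j : (dot (x i) (x j) - n%:R^-1) ^+ 2
    = dot (x i) (x j) ^+ 2 - 2 * n%:R^-1 * dot (x i) (x j) + n%:R^-1 ^+ 2.
  by ring.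
rewrite (eq_bigr _ (fun j _ => expand j)) !big_split /= sumrN -mulr_sumr.
rewrite frame_tight frame_unit -dot_sumr inner sumr_const card_ord.
by field; rewrite dim_neq0.
Qed.

Local Notation y i := ((Num.sqrt t)^-1 *: z i).

Lemma rescaled_dot i j : dot (y i) (y j) = (dot (x i) (x j) - n%:R^-1) / t.
Proof.
have t_ge0 : 0 <= t by rewrite subr_ge0 invf_le1 ?ler1n ?ltr0n.
by rewrite dotZl dotZr centred_dot mulrA -expr2 exprVn sqr_sqrtr // mulrC.
Qed.

Lemma rescaled_unit i : dot (y i) (y i) = 1.
Proof. by rewrite rescaled_dot frame_unit divff // radius_neq0. Qed.

Lemma rescaled_in_orth i : (y i <= orth_compl s)%MS.
Proof. by rewrite orth_complP dotZl centred_orth mulr0. Qed.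

Lemma rescaled_design : spherical_2_design (orth_compl s) (fun i => y i).
Proof.
split; [exact: rescaled_in_orth | exact: rescaled_unit | |].
  rewrite -scaler_sumr sumrB sumr_const card_ord -scaler_nat scalerA.
  by rewrite mulfV ?size_neq0 // scale1r subrr scaler0.
rewrite rank_orth_compl ?frame_sum_neq0 // -subn1 natrB ?dim_gt1 //.
rewrite (eq_bigr (fun=> c / t)) => [|i _].
  by rewrite sumr_const card_ord; field; rewrite dim_sub1_neq0 dim_neq0.
under eq_bigr do rewrite rescaled_dot expr_div_n.
by rewrite -mulr_suml centred_gram_row expr2; field; rewrite dim_neq0 dim_sub1_neq0.
Qed.

End ShiftedCase.

End TwoDistanceTightFrame.

Theorem proposition3p1 (R : rcfType) (n N : nat) (x : 'I_N -> 'rV[R]_n)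
    (a b : R) :
  (0 < n)%N -> (1 < N)%N ->
  two_distance_tight_frame x a b ->
  a ^+ 2 != b ^+ 2 ->
  let s := \sum_(i < N) x i in
  let y := fun i => (Num.sqrt (1 - n%:R^-1))^-1 *: (x i - N%:R^-1 *: s) in
  let P1 :=
    [/\ s = 0,
        spherical_2_design 1%:M x
      & - n%:R * (a + b) - n%:R * a * b * (N%:R - 1) = N%:R - n%:R] in
  let P2 :=
    (forall i, dot (x i) s = N%:R / n%:R) /\
    dot s s = N%:R ^+ 2 / n%:R /\
    (forall i, dot (y i) (y i) = 1) /\
    (forall i, (y i <= orth_compl s)%MS) /\
    \rank (orth_compl s) = n.-1 /\
    spherical_2_design (orth_compl s) y /\
    (forall i, dot (x i - N%:R^-1 *: s) (x i - N%:R^-1 *: s) = 1 - n%:R^-1) /\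
    (N%:R - n%:R) * (a + b) - n%:R * a * b * (N%:R - 1) = N%:R - n%:R in
  (P1 /\ ~ P2) \/ (~ P1 /\ P2).
Proof.
move=> n_gt0 N_gt1 frame ab2 s y P1 P2.
pose i0 : 'I_N := Ordinal (ltnW N_gt1).
have P2_sum_neq0 : P2 -> s != 0.
  by move=> [inner _]; exact: frame_sum_neq0 n_gt0 N_gt1 inner.
have [s0 | inner] := frame_sum_cases frame N_gt1 ab2; [left | right].
- split; last by move/P2_sum_neq0; rewrite /s s0 eqxx.
  split=> //; first exact: frame_design frame n_gt0 s0.
  by have := frame_equation frame n_gt0 i0; rewrite s0 dot0r mulr0 sub0r mulNr.
- have s_neq0 : s != 0 := frame_sum_neq0 n_gt0 N_gt1 inner.
  split; first by rewrite /P1 => -[s0 _ _]; rewrite s0 eqxx in s_neq0.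
  split=> //; split; first exact: frame_sum_norm n_gt0 inner.
  split; first exact: rescaled_unit frame n_gt0 N_gt1 inner.
  split; first exact: rescaled_in_orth n_gt0 N_gt1 inner.
  split; first exact: rank_orth_compl.
  split; first exact: rescaled_design frame n_gt0 N_gt1 inner.
  split; first exact: centred_norm frame n_gt0 N_gt1 inner.
  have := frame_equation frame n_gt0 i0.
  by rewrite inner mulrCA mulfV ?mulr1 // pnatr_eq0 -lt0n.
Qed.
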